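(* Let $S \subseteq \mathbb{R}^r$ be a linear subspace, let $0 \le d \le r$, and let $C(S,d)$ be the associated s-cone. Every nonzero vector $x \in C(S,d)$ is a conformal sum of elementary vectors of $C(S,d)$; that is, there exists a finite set $E \subseteq C(S,d)$ of elementary vectors such that \[ x = \sum_{e \in E} e \quad \text{with } \operatorname{sign}(e) \le \operatorname{sign}(x) \text{ for all } e \in E. \] Moreover, the set $E$ can be chosen such that its elements are linearly independent; in particular, they can be ordered such that every $e \in E$ has a component which is nonzero in $e$ but zero in all its predecessors in the ordering. Then $|E| \le \dim(S)$ and $|E| \le |\operatorname{supp}(x)|$.
   Context: For $x \in \mathbb{R}^n$, $\operatorname{supp}(x) = \{ i \mid x_i \neq 0\}$, and $\operatorname{sign}(x) \in \{-,0,+\}^n$ is obtained by applying the sign function componentwise. The relations $0 < -$ and $0 < +$ induce a partial order on $\{-,0,+\}^n$ (componentwise; $-$ and $+$ are incomparable), and for sign vectors $X \le Y$ means this holds in every component. For a linear subspace $S \subseteq \mathbb{R}^r$ and $0 \le d \le r$, the s-cone is $C(S,d) = \{ (x,y) \in \mathbb{R}^{(r-d)+d} \mid (x,y) \in S,\ y \ge 0\}$ (the last $d$ coordinates are required to be nonnegative). A nonzero vector $e \in C(S,d)$ is called elementary if it is support-minimal: for every nonzero $x' \in C(S,d)$, $\operatorname{supp}(x') \subseteq \operatorname{supp}(e)$ implies $\operatorname{supp}(x') = \operatorname{supp}(e)$. *)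

From HB Require Import structures.
From mathcomp Require Import all_boot all_order all_algebra.
From mathcomp Require Import reals.
Set Implicit Arguments. Unset Strict Implicit. Unset Printing Implicit Defensive.
Import Order.TTheory GRing.Theory Num.Theory.
Local Open Scope ring_scope.

(* Vectors of R^r are row vectors 'rV[R]_r; coordinate i of x is x 0 i. *)

Definition supp (R : realType) (r : nat) (x : 'rV[R]_r) : {set 'I_r} :=
  [set i | x 0 i != 0].

(* sign vectors: sign(x)_i is represented by Num.sg (x 0 i) in {-1,0,1};
   the partial order 0 < -, 0 < + (- and + incomparable), componentwise *)
Definition sign_le (R : realType) (r : nat) (e x : 'rV[R]_r) : Prop :=
  forall i : 'I_r, Num.sg (e 0 i) = 0 \/ Num.sg (e 0 i) = Num.sg (x 0 i).

Definition scone (R : realType) (r : nat) (S : {vspace 'rV[R]_r}) (d : nat)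
  (x : 'rV[R]_r) : Prop :=
  x \in S /\ forall i : 'I_r, (r - d <= i)%N -> 0 <= x 0 i.

Definition elementary (R : realType) (r : nat) (S : {vspace 'rV[R]_r}) (d : nat)
  (e : 'rV[R]_r) : Prop :=
  [/\ scone S d e, e != 0 &
      forall x' : 'rV[R]_r, scone S d x' -> x' != 0 ->
        supp x' \subset supp e -> supp x' = supp e].

From HB Require Import structures.
From mathcomp Require Import all_boot all_order all_algebra.
From mathcomp Require Import reals.
From mathcomp Require Import ring lra.
From Stdlib Require Import Classical_Prop.
Set Implicit Arguments. Unset Strict Implicit. Unset Printing Implicit Defensive.
Import Order.TTheory GRing.Theory Num.Theory.
Local Open Scope ring_scope.

(* Pick an elementary vector y conformal to x (one exists: if a cone vector
   has a strictly smaller support inside supp y, a ratio-test combination of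
   it with y is conformal to y and has smaller support still).  The ratio test
   applied to x and y then gives t > 0 such that x - t y is conformal to x and
   vanishes at a coordinate i0 where t y does not.  Decomposing x - t y by
   induction on the support and appending t y, each new summand is nonzero at
   a coordinate where all its predecessors vanish; this gives linear
   independence, hence |E| <= dim S, and each step shrinks the support, hence
   |E| <= |supp x|. *)

Section Conformal.
Variables (R : realType) (r : nat).
Implicit Types a b c y z : 'rV[R]_r.

(* [a] is conformal to [b]: sign(a) <= sign(b), in a form usable by [nra]. *)
Definition conformal a b := forall i, a 0 i = 0 \/ 0 < a 0 i * b 0 i.

Lemma conformal_refl a : conformal a a.
Proof.
move=> i; have [->|ai0] := eqVneq (a 0 i) 0; [by left | right].
by rewrite -expr2 exprn_even_gt0.
Qed.

Lemma conformal_trans a b c : conformal a b -> conformal b c -> conformal a c.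
Proof.
move=> ab bc i; case: (ab i) => [|abi]; first by left.
right; case: (bc i) => [b0|]; last by nra.
by rewrite b0 mulr0 ltxx in abi.
Qed.

Lemma conformalZl t a b : 0 < t -> conformal a b -> conformal (t *: a) b.
Proof.
move=> t_gt0 ab i; rewrite mxE.
by case: (ab i) => [->|]; [left; rewrite mulr0 | right; nra].
Qed.

Lemma conformal_sign_le a b : conformal a b -> sign_le a b.
Proof.
move=> ab i; case: (ab i) => [->|abi]; first by left; rewrite sgr0.
right; have [ai|ai|a0] := ltrgt0P (a 0 i); last by rewrite a0 mul0r ltxx in abi.
- by rewrite (gtr0_sg ai) gtr0_sg //; nra.
- by rewrite (ltr0_sg ai) ltr0_sg //; nra.
Qed.

Lemma conformal_supp a b : conformal a b -> supp a \subset supp b.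
Proof.
move=> ab; apply/subsetP => i; rewrite !inE => ai.
case: (ab i) => [a0|abi]; first by rewrite a0 eqxx in ai.
by apply: contraTneq abi => ->; rewrite mulr0 ltxx.
Qed.

Lemma supp_eq0 a : (supp a == set0) = (a == 0).
Proof.
apply/eqP/eqP => [a0|->]; last by apply/setP => i; rewrite !inE mxE eqxx.
apply/rowP => i; rewrite mxE; apply/eqP; apply: contraT => ai.
by have := in_set0 i; rewrite -a0 inE ai.
Qed.

Lemma exists_supp a : a != 0 -> exists i, a 0 i != 0.
Proof.
by rewrite -supp_eq0 => /set0Pn[i]; rewrite inE; exists i.
Qed.

Lemma supp_oppr a : supp (- a) = supp a.
Proof. by apply/setP => i; rewrite !inE mxE oppr_eq0. Qed.

Lemma supp_scaler (t : R) a : t != 0 -> supp (t *: a) = supp a.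
Proof. by move=> t0; apply/setP => i; rewrite !inE mxE mulf_eq0 negb_or t0. Qed.

Lemma conformal_supp_ltn a b i :
  conformal a b -> b 0 i != 0 -> a 0 i = 0 -> (#|supp a| < #|supp b|)%N.
Proof.
move=> ab bi ai; apply: proper_card; apply/properP.
by split; [exact: conformal_supp | exists i; rewrite inE ?ai ?eqxx].
Qed.

(* Ratio test: subtract from [y] the largest multiple [t z] that stays
   conformal to [y]; [t] is the least ratio [y_i / z_i] over the coordinates
   where [z] and [y] have the same sign. *)
Lemma ratio_test y z :
  supp z \subset supp y -> (exists i, 0 < z 0 i * y 0 i) ->
  exists2 t, 0 < t &
    conformal (y - t *: z) y /\ exists i, y 0 i != 0 /\ (y - t *: z) 0 i = 0.
Proof.
move=> zy [i0 zyi0]; pose P i := 0 < z 0 i * y 0 i.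
case: (@arg_minP _ R _ i0 P (fun i => y 0 i / z 0 i) zyi0) => i1 zyi1 tmin.
set t := y 0 i1 / z 0 i1 in tmin *.
have {}zyi1 : 0 < z 0 i1 * y 0 i1 := zyi1.
have z1 : z 0 i1 != 0 by apply: contraTneq zyi1 => ->; rewrite mul0r ltxx.
have y1 : y 0 i1 != 0 by apply: contraTneq zyi1 => ->; rewrite mulr0 ltxx.
have t_gt0 : 0 < t.
  have -> : t = (z 0 i1 * y 0 i1) / (z 0 i1 ^+ 2) by rewrite /t; field.
  by rewrite divr_gt0 // exprn_even_gt0.
exists t => //; split; last by exists i1; rewrite !mxE /t divfK // subrr.
move=> i; rewrite !mxE; have [->|zi] := eqVneq (z 0 i) 0.
  by rewrite mulr0 subr0; apply: conformal_refl.
have yi : y 0 i != 0 by move/subsetP: zy => /(_ i); rewrite !inE; apply.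
have yi2 : 0 < y 0 i * y 0 i by rewrite -expr2 exprn_even_gt0.
have [Pi|nPi] := boolP (P i); last by right; rewrite /P -leNgt in nPi; nra.
have t_le := tmin i Pi; rewrite /P in Pi.
have w_ge0 : 0 <= (y 0 i - t * z 0 i) * y 0 i.
  have -> : (y 0 i - t * z 0 i) * y 0 i = (y 0 i / z 0 i - t) * (z 0 i * y 0 i).
    by field.
  by apply: mulr_ge0; [rewrite subr_ge0 | exact: ltW].
have [|w0] := eqVneq (y 0 i - t * z 0 i) 0; first by left.
by right; rewrite lt_def mulf_neq0.
Qed.

Lemma free_rcons_fresh (E : seq 'rV[R]_r) (v : 'rV[R]_r) i :
  free E -> (forall e, e \in E -> e 0 i = 0) -> v 0 i != 0 -> free (rcons E v).
Proof.
move=> freeE Ei vi.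
rewrite (perm_free (permEl (perm_rcons v E))) free_cons freeE andbT.
apply: contra vi => /(coord_span (X := in_tuple E)) ->.
rewrite summxE big1 // => k _.
by rewrite mxE (Ei E`_k) ?mulr0 // mem_nth.
Qed.

Definition has_pivots (E : seq 'rV[R]_r) :=
  forall k, (k < size E)%N ->
    exists i, E`_k 0 i != 0 /\ forall j, (j < k)%N -> E`_j 0 i = 0.

Lemma has_pivots_rcons (E : seq 'rV[R]_r) (v : 'rV[R]_r) i :
  has_pivots E -> (forall e, e \in E -> e 0 i = 0) -> v 0 i != 0 ->
  has_pivots (rcons E v).
Proof.
move=> pivE Ei vi k; rewrite size_rcons ltnS leq_eqVlt => /predU1P[->|kE].
  exists i; rewrite nth_rcons ltnn eqxx; split=> // j jE.
  by rewrite nth_rcons jE Ei ?mem_nth.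
have [l [El Ejl]] := pivE k kE; exists l; rewrite nth_rcons kE.
by split=> // j jk; rewrite nth_rcons (ltn_trans jk kE) Ejl.
Qed.

Section Cone.
Variables (S : {vspace 'rV[R]_r}) (d : nat).

Lemma scone_conformal a b :
  scone S d b -> a \in S -> conformal a b -> scone S d a.
Proof.
by move=> [_ b_ge0] aS ab; split=> // i /b_ge0; case: (ab i) => [->|]; nra.
Qed.

Lemma scone_subrZ_conformal y z t : scone S d y -> scone S d z ->
  conformal (y - t *: z) y -> scone S d (y - t *: z).
Proof.
move=> yC [zS _] /(scone_conformal yC); apply.
by case: yC => yS _; rewrite memvB ?memvZ.
Qed.

Lemma elementaryZ t y : 0 < t -> elementary S d y -> elementary S d (t *: y).
Proof.
move=> t_gt0 [[yS y_ge0] y0 ymin]; have t0 : t != 0 by rewrite gt_eqF.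
split.
- by split=> [|i /y_ge0]; rewrite ?memvZ // mxE; apply: mulr_ge0; rewrite ltW.
- by rewrite scaler_eq0 negb_or t0.
- by rewrite supp_scaler //; exact: ymin.
Qed.

(* If no coordinate of [z] has the sign of [y], then [z] vanishes on the last
   [d] coordinates (where [y, z >= 0]), so [-z] is in the cone and does. *)
Lemma scone_sign_choice y z : scone S d y -> scone S d z -> z != 0 ->
  supp z \subset supp y ->
  exists2 z', scone S d z' /\ supp z' = supp z & exists i, 0 < z' 0 i * y 0 i.
Proof.
move=> yC zC z0 zy.
have y_of_z i : z 0 i != 0 -> y 0 i != 0.
  by move/subsetP: zy => /(_ i); rewrite !inE; apply.
case: (classic (exists i, 0 < z 0 i * y 0 i)) => [zyi|nzy].
  by exists z.
have [zS z_ge0] := zC.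
have zy_le0 i : z 0 i * y 0 i <= 0.
  by rewrite leNgt; apply/negP => zyi; apply: nzy; exists i.
exists (- z); first split; rewrite ?supp_oppr //.
  split=> [|i ri]; first by rewrite memvN.
  rewrite mxE oppr_ge0; have [->//|zi] := eqVneq (z 0 i) 0.
  have yi_gt0 : 0 < y 0 i by rewrite lt0r y_of_z //; case: yC => _; apply.
  have zi_gt0 : 0 < z 0 i by rewrite lt0r zi z_ge0.
  by have := zy_le0 i; nra.
have [i zi] := exists_supp z0; exists i; rewrite mxE.
have zyi0 : z 0 i * y 0 i != 0 by rewrite mulf_neq0 ?y_of_z.
by rewrite mulNr oppr_gt0 lt_neqAle zyi0 zy_le0.
Qed.

Lemma scone_shrink_supp y z :
  scone S d y -> scone S d z -> z != 0 -> supp z \proper supp y ->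
  exists w,
    [/\ scone S d w, w != 0, conformal w y & (#|supp w| < #|supp y|)%N].
Proof.
move=> yC zC z0 /properP[zy [j yj zj]].
have [z' [z'C z'z] [i z'y]] := scone_sign_choice yC zC z0 zy.
rewrite -z'z in zy zj.
have [t _ [w_conf [i1 [y1 w1]]]] := ratio_test zy (ex_intro _ i z'y).
exists (y - t *: z'); split.
- exact: scone_subrZ_conformal.
- apply: contraTneq yj => /rowP/(_ j); rewrite !mxE.
  move: zj; rewrite inE negbK => /eqP->; rewrite mulr0 subr0 inE => ->.
  by rewrite eqxx.
- exact: w_conf.
- exact: conformal_supp_ltn w1.
Qed.

Lemma exists_elementary_conformal x : scone S d x -> x != 0 ->
  exists2 y, elementary S d y & conformal y x.
Proof.
move=> xC x0; have [n] := ubnP #|supp x|.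
elim: n => // n IH in x xC x0 *; rewrite ltnS => xn.
case: (classic (exists z, [/\ scone S d z, z != 0 & supp z \proper supp x])).
  move=> [z [zC z0 zx]].
  have [w [wC w0 wx wlt]] := scone_shrink_supp xC zC z0 zx.
  have [y y_el yw] := IH w wC w0 (leq_trans wlt xn).
  by exists y => //; exact: conformal_trans wx.
move=> nosmaller; exists x; last exact: conformal_refl.
split=> // z zC z0 zx; apply/eqP; apply: contraT => zx'.
by case: nosmaller; exists z; split; rewrite // properEneq zx' zx.
Qed.

Lemma conformal_decomposition x : scone S d x ->
  exists E : seq 'rV[R]_r,
    [/\ uniq E, forall e, e \in E -> elementary S d e /\ conformal e x,
        x = \sum_(e <- E) e, free E & has_pivots E] /\ (size E <= #|supp x|)%N.
Proof.
have [n] := ubnP #|supp x|; elim: n => // n IH in x *; rewrite ltnS => xn xC.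
have [->|x0] := eqVneq x 0.
  by exists [::]; split; rewrite ?big_nil ?nil_free.
have [y y_el yx] := exists_elementary_conformal xC x0.
have [[yS y_ge0] y0 _] := y_el.
have [i yi] := exists_supp y0.
have yxi : 0 < y 0 i * x 0 i by case: (yx i) => // y0i; rewrite y0i eqxx in yi.
have [t t_gt0 [x'x [i0 [xi0 x'i0]]]] :=
  ratio_test (conformal_supp yx) (ex_intro _ i yxi).
set x' := x - t *: y in x'x x'i0.
have x'lt := conformal_supp_ltn x'x xi0 x'i0.
have x'C : scone S d x' by exact: scone_subrZ_conformal.
have [E' [[uE' E'el sumE' freeE' pivE'] E'size]] :=
  IH x' (leq_trans x'lt xn) x'C.
have E'i0 e : e \in E' -> e 0 i0 = 0.
  move=> /E'el[_ /(_ i0)[] //]; by rewrite x'i0 mulr0 ltxx.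
have tyi0 : (t *: y) 0 i0 != 0.
  by move/eqP: x'i0; rewrite !mxE subr_eq0 => /eqP <-.
exists (rcons E' (t *: y)); split; last first.
  by rewrite size_rcons (leq_ltn_trans E'size).
split.
- by rewrite rcons_uniq uE' andbT; apply: contra tyi0 => /E'i0 ->.
- move=> e; rewrite mem_rcons inE => /predU1P[->|/E'el[e_el ex']].
    by split; [exact: elementaryZ | exact: conformalZl].
  by split=> //; exact: conformal_trans x'x.
- by rewrite big_rcons /= -sumE' subrK.
- exact: free_rcons_fresh tyi0.
- exact: has_pivots_rcons tyi0.
Qed.

End Cone.
End Conformal.

Theorem theorem1 (R : realType) (r : nat) (S : {vspace 'rV[R]_r}) (d : nat)
  (hd : (d <= r)%N) (x : 'rV[R]_r) (hx : scone S d x) (hx0 : x != 0) :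
  exists E : seq 'rV[R]_r,
    [/\ uniq E,
        forall e, e \in E -> elementary S d e /\ sign_le e x,
        x = \sum_(e <- E) e &
        free E] /\
    [/\
        (forall k : nat, (k < size E)%N ->
           exists i : 'I_r, E`_k 0 i != 0 /\
             forall j : nat, (j < k)%N -> E`_j 0 i = 0),
        (size E <= \dim S)%N &
        (size E <= #|supp x|)%N].
Proof.
have [E [[uE Eel sumE freeE pivE] sizeE]] := conformal_decomposition hx.
exists E; split; split=> //.
- by move=> e /Eel[e_el ex]; split=> //; exact: conformal_sign_le.
- move/eqP: freeE => <-; apply: dimvS; apply/span_subvP => e /Eel.
  by case=> -[[]].
Qed.
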